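(* Let $r\ge1$, $\mathbf{M}=(M_0,\dots,M_{e-1})\in\mathbb{Z}_{\ge0}^e$ and $(\boldsymbol\lambda,\mathbf{s}),(\boldsymbol\mu,\mathbf{s}')\in\mathcal{A}_e^r$. Then $(\boldsymbol\lambda,\mathbf{s})\approx_e(\boldsymbol\mu,\mathbf{s}')$ if and only if $\mathrm{Str}((\boldsymbol\lambda,\mathbf{s});\mathbf{M})\approx_e\mathrm{Str}((\boldsymbol\mu,\mathbf{s}');\mathbf{M})$.
   Context: Fix an integer $e\ge 2$. A partition is a weakly decreasing sequence $\lambda=(\lambda_1,\lambda_2,\dots)$ of non-negative integers with finite sum $|\lambda|$; $\Lambda$ denotes the set of partitions and $\Lambda^{(m)}$ the set of $m$-multipartitions, i.e. $m$-tuples $\boldsymbol\lambda=(\lambda^{(1)},\dots,\lambda^{(m)})$ of partitions, with $|\boldsymbol\lambda|=\sum_k|\lambda^{(k)}|$. A $\beta$-set is a subset $B\subseteq\mathbb{Z}$ containing all sufficiently small integers and no sufficiently large ones. For $\lambda\in\Lambda$ and $s\in\mathbb{Z}$ set $B_s(\lambda)=\{\lambda_i-i+s : i\ge 1\}$; every $\beta$-set equals $B_s(\lambda)$ for a unique pair $(\lambda,s)$. Let $\mathcal{A}_e=\Lambda\times\mathbb{Z}$ (abacus configurations with $e$ runners) and $\mathcal{A}_e^m=\Lambda^{(m)}\times\mathbb{Z}^m$, where $(\boldsymbol\lambda,\mathbf{s})$ is identified with the $m$-tuple of $\beta$-sets $(B_{s_1}(\lambda^{(1)}),\dots,B_{s_m}(\lambda^{(m)}))$.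 Blocks: for $(\boldsymbol\lambda,\mathbf{s})\in\mathcal{A}_e^m$, its $e$-residue multiset is the multiset of the values $s_k+y-x \bmod e$ over all nodes $(x,y,k)$ with $x\ge1$, $1\le y\le\lambda^{(k)}_x$, $1\le k\le m$. Define $(\boldsymbol\lambda,\mathbf{s})\approx_e(\boldsymbol\mu,\mathbf{s}')$ iff $\mathbf{s}=\mathbf{s}'$, $|\boldsymbol\lambda|=|\boldsymbol\mu|$ and the $e$-residue multisets coincide. Its equivalence classes are called blocks. The map $\eta$: for $(\lambda,s)\in\mathcal{A}_e$ with $B=B_s(\lambda)$ and $0\le i<e$, the set $C_i=\{(b-i)/e : b\in B,\ b\equiv i \bmod e\}$ is a $\beta$-set, so $C_i=B_{t_i}(\rho_i)$ for a unique $(\rho_i,t_i)\in\Lambda\times\mathbb{Z}$; set $\eta(\lambda,s)=((\rho_0,\dots,\rho_{e-1}),(t_0,\dots,t_{e-1}))$; $\eta$ is a bijection $\mathcal{A}_e\to\Lambda^{(e)}\times\mathbb{Z}^e$. Stretching: for $\mathbf{M}\in\mathbb{Z}^e$ and $(\lambda,s)\in\mathcal{A}_e$ with $\eta(\lambda,s)=(\boldsymbol\rho,(t_0,\dots,t_{e-1}))$, $\mathrm{Str}((\lambda,s);\mathbf{M})$ is the unique element of $\mathcal{A}_e$ whose image under $\eta$ is $(\boldsymbol\rho,(t_0+M_0,\dots,t_{e-1}+M_{e-1}))$. For $(\boldsymbol\lambda,\mathbf{s})\in\mathcal{A}_e^r$, $\mathrm{Str}((\boldsymbol\lambda,\mathbf{s});\mathbf{M})$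 is obtained by applying this to each component $(\lambda^{(k)},s_k)$; for a subset $\mathcal{R}$, $\mathrm{Str}(\mathcal{R};\mathbf{M})$ is its image. *)

From Stdlib Require Import ClassicalEpsilon.
From mathcomp Require Import all_boot all_order all_algebra.
Set Implicit Arguments. Unset Strict Implicit. Unset Printing Implicit Defensive.
Import Order.TTheory GRing.Theory Num.Theory.
Local Open Scope ring_scope.

(* A partition is represented by the list of its nonzero parts, weakly
   decreasing: lambda_i = nth 0 l (i-1) for i >= 1, and 0 beyond. *)
Definition is_partition (l : seq nat) : bool :=
  sorted (fun a b => (b <= a)%N) l && all (fun a => (0 < a)%N) l.

Definition part (l : seq nat) (i : nat) : nat := nth 0%N l i.-1.

Definition beta_set (l : seq nat) (s : int) : int -> Prop :=
  fun b => exists i : nat, (0 < i)%N /\ b = (part l i)%:Z - i%:Z + s.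

Definition config := (seq nat * int)%type.

Definition runner_set (e : nat) (B : int -> Prop) (i : nat) : int -> Prop :=
  fun c => exists b, B b /\ (b %% e%:Z)%Z = i%:Z /\ c = ((b - i%:Z) %/ e%:Z)%Z.

Definition beta_decomp (C : int -> Prop) : config :=
  epsilon (inhabits ([::], 0))
    (fun p => is_partition p.1 /\ forall c, C c <-> beta_set p.1 p.2 c).

(* eta(lambda, s) = ((rho_0..rho_{e-1}), (t_0..t_{e-1})), as a function of i *)
Definition eta (e : nat) (x : config) (i : 'I_e) : config :=
  beta_decomp (runner_set e (beta_set x.1 x.2) i).

Definition Str (e : nat) (M : 'I_e -> nat) (x : config) : config :=
  epsilon (inhabits ([::], 0))
    (fun y => is_partition y.1 /\
       forall i : 'I_e, @eta e y i = ((@eta e x i).1, (@eta e x i).2 + (M i)%:Z)).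

Definition mconfig (r : nat) := (('I_r -> seq nat) * {ffun 'I_r -> int})%type.

Definition mStr (e : nat) (M : 'I_e -> nat) (r : nat) (X : mconfig r)
  : mconfig r :=
  (fun k => (Str M (X.1 k, X.2 k)).1, [ffun k => (Str M (X.1 k, X.2 k)).2]).

Definition msize r (X : mconfig r) : nat := (\sum_(k < r) sumn (X.1 k))%N.

(* multiplicity of residue j in the e-residue multiset of X:
   number of nodes (x,y,k), x>=1, 1<=y<=lambda^(k)_x, with
   s_k + y - x = j mod e *)
Definition res_count (e : nat) r (X : mconfig r) (j : 'I_e) : nat :=
  (\sum_(k < r) \sum_(x < size (X.1 k)) \sum_(y < nth 0%N (X.1 k) x)
     (((X.2 k + y.+1%:Z - x.+1%:Z) %% e%:Z)%Z == (nat_of_ord j)%:Z))%N.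

Definition block_eq (e : nat) r (X Y : mconfig r) : Prop :=
  X.2 = Y.2 /\ msize X = msize Y /\ forall j : 'I_e, res_count X j = res_count Y j.

(* Stretching moves every bead on runner [i] of the abacus by [M i] places: the
   new beta-set is the preimage of the old one under the bijection
   [m |-> m - e * M_(m mod e)] of [Z], and the charge grows by [sum_i M i].
   The number [N_j] of nodes of residue [j] is the finite difference of the sums
   of [F_j m = floor((m - j) / e)] over [B_s(lambda)] and over [B_s(0)].  Since
   [F_j (m + e * M_i) = F_j m + M_i], stretching turns [N_j] into
   [N_j + sum_i M_i (N_i - N_(i+1)) + D_j(s)], where the defect [D_j(s)] depends
   on the charge only.  So for equal charges the differences [d_j] of the residue
   counts of two configurations become [d_j + c] with [c] independent of [j];
   if these vanish, all [d_j] are equal, hence [c = 0] and [d = 0]. *)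

From Stdlib Require Import ClassicalEpsilon Classical.
From mathcomp Require Import all_boot all_order all_algebra zify ring.
Set Implicit Arguments. Unset Strict Implicit. Unset Printing Implicit Defensive.
Import Order.TTheory GRing.Theory Num.Theory.
Local Open Scope ring_scope.

Section ResidueFloor.
Variable e : nat.
Hypothesis e_gt0 : (0 < e)%N.

Lemma e_neq0 : e%:Z != 0. Proof. by rewrite eqz_nat -lt0n. Qed.
Lemma e_gt0z : 0 < e%:Z. Proof. by rewrite ltz_nat. Qed.

(* [floor_res j] increases by one exactly at the integers congruent to [j]. *)
Definition floor_res (j : nat) (m : int) : int := ((m - j%:Z) %/ e%:Z)%Z.

Lemma divzS_sub (u : int) :
  ((u + 1) %/ e%:Z)%Z - (u %/ e%:Z)%Z = (((u + 1) %% e%:Z)%Z == 0) :> int.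
Proof.
have hu := divz_eq u e%:Z.
have h0 := modz_ge0 u e_neq0; have h1 := ltz_pmod u e_gt0z.
set q := (u %/ e%:Z)%Z in hu *; set r := (u %% e%:Z)%Z in hu h0 h1.
have [hr|hr] := ltP (r + 1) e%:Z.
  have -> : u + 1 = q * e%:Z + (r + 1) by rewrite hu -addrA.
  rewrite divzMDl ?e_neq0 // divz_small; last by apply/andP; split; lia.
  rewrite modzMDl modz_small; last by apply/andP; split; lia.
  have -> : (r + 1 == 0) = false by apply/eqP; lia.
  by rewrite addr0 subrr.
have -> : u + 1 = (q + 1) * e%:Z by rewrite hu mulrDl mul1r; lia.
by rewrite mulzK ?e_neq0 // modzMl eqxx; lia.
Qed.

Lemma modz_subn_eq0 (x : int) (j : nat) : (j < e)%N ->
  (((x - j%:Z) %% e%:Z)%Z == 0) = ((x %% e%:Z)%Z == j%:Z).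
Proof.
move=> hj.
have hjj : j%:Z = (j%:Z %% e%:Z)%Z by rewrite modz_small //; apply/andP; split; lia.
rewrite [in RHS]hjj -/(x == j%:Z %[mod e%:Z])%Z eqz_mod_dvd.
by apply/idP/idP => [/eqP/dvdz_mod0P|/dvdz_mod0P/eqP].
Qed.

Lemma floor_resS (j : nat) (x : int) : (j < e)%N ->
  floor_res j (x + 1) - floor_res j x = (((x + 1) %% e%:Z)%Z == j%:Z) :> int.
Proof.
move=> hj; rewrite /floor_res -modz_subn_eq0 //.
have -> : x + 1 - j%:Z = x - j%:Z + 1 by lia.
by rewrite divzS_sub.
Qed.

Lemma count_res_interval (a : int) (n j : nat) : (j < e)%N ->
  (\sum_(y < n) (((a + y.+1%:Z) %% e%:Z)%Z == j%:Z) : nat)%:Z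
   = floor_res j (a + n%:Z) - floor_res j a.
Proof.
move=> hj; elim: n => [|n IH]; first by rewrite big_ord0 addr0 subrr.
rewrite big_ord_recr /= PoszD IH.
have -> : a + n.+1%:Z = (a + n%:Z) + 1 by lia.
by rewrite -(floor_resS _ hj); lia.
Qed.

Lemma floor_res_subS (i : nat) (m : int) : (i < e)%N ->
  floor_res i m - floor_res i.+1 m = ((m %% e%:Z)%Z == i%:Z)%:R.
Proof.
move=> hi.
have -> : floor_res i.+1 m = floor_res i (m - 1).
  by rewrite /floor_res; congr (_ %/ _)%Z; lia.
by have := floor_resS (m - 1) hi; rewrite subrK => ->; case: (_ == _).
Qed.

Lemma floor_res_e (m : int) : floor_res e m = floor_res 0 m - 1.
Proof.
rewrite /floor_res.
have -> : m - e%:Z = (-1) * e%:Z + (m - 0%:Z) by lia.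
by rewrite divzMDl ?e_neq0 // addrC.
Qed.

Lemma floor_resD (j : nat) (m : int) (k : nat) :
  floor_res j (m + (e * k)%N%:Z) = floor_res j m + k%:Z.
Proof.
rewrite /floor_res.
have -> : m + (e * k)%N%:Z - j%:Z = k%:Z * e%:Z + (m - j%:Z) by rewrite PoszM; lia.
by rewrite divzMDl ?e_neq0 // addrC.
Qed.

Lemma modz_ord (m : int) : exists i : 'I_e, (m %% e%:Z)%Z = (nat_of_ord i)%:Z.
Proof.
have h0 := modz_ge0 m e_neq0; have h1 := ltz_pmod m e_gt0z.
have hi : (`|(m %% e%:Z)%Z|%N < e)%N by lia.
by exists (Ordinal hi) => /=; lia.
Qed.

Lemma modzDMl (m k : int) : ((m + k * e%:Z) %% e%:Z)%Z = (m %% e%:Z)%Z.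
Proof. by rewrite addrC modzMDl. Qed.

Lemma sum_res_seln (m : int) (i : 'I_e) (G : 'I_e -> nat) :
  (m %% e%:Z)%Z = i%:Z ->
  (\sum_(i' < e) (((m %% e%:Z)%Z == i'%:Z) * G i'))%N = G i.
Proof.
move=> hm; rewrite (bigD1 i) //= hm eqxx mul1n big1 ?addn0 // => j hj.
suff -> : (i%:Z == j%:Z) = false by rewrite mul0n.
by apply/negbTE; rewrite eqz_nat eq_sym.
Qed.

Lemma sum_res_sel (m : int) (i : 'I_e) (G : 'I_e -> int) :
  (m %% e%:Z)%Z = i%:Z ->
  \sum_(i' < e) (((m %% e%:Z)%Z == i'%:Z)%:R * G i') = G i.
Proof.
move=> hm; rewrite (bigD1 i) //= hm eqxx mul1r big1 ?addr0 // => j hj.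
suff -> : (i%:Z == j%:Z) = false by rewrite mul0r.
by apply/negbTE; rewrite eqz_nat eq_sym.
Qed.

Lemma sum_res_eq1 (m : int) :
  (\sum_(j < e) (((m %% e%:Z)%Z == (nat_of_ord j)%:Z) : nat))%N = 1%N.
Proof.
have [i hi] := modz_ord m.
by have := sum_res_seln (fun _ => 1%N) hi; under eq_bigr do rewrite muln1.
Qed.

End ResidueFloor.

Lemma nth_le_sumn (l : seq nat) i : (nth 0%N l i <= sumn l)%N.
Proof.
elim: l i => [|a l IH] [|i] //=; first exact: leq_addr.
exact: leq_trans (IH i) (leq_addl _ _).
Qed.

Lemma partition_nthS (l : seq nat) X :
  is_partition l -> (nth 0%N l X.+1 <= nth 0%N l X)%N.
Proof.
case/andP=> /(sortedP 0%N) hs _.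
by case: (ltnP X.+1 (size l)) => [/hs //|hX]; rewrite nth_default.
Qed.

Lemma partition_nth_gt0 (l : seq nat) X :
  is_partition l -> (X < size l)%N -> (0 < nth 0%N l X)%N.
Proof. by case/andP=> _ /allP ha hX; apply: ha; exact: mem_nth. Qed.

(* The [X]-th bead, counted from 0: [lambda_(X+1) - (X+1) + s]. *)
Definition bead (l : seq nat) (s : int) (X : nat) : int :=
  (nth 0%N l X)%:Z - X%:Z - 1 + s.

Lemma beta_setE l s m : beta_set l s m <-> exists X, m = bead l s X.
Proof.
split; first by case=> [[|i] [hi ->]] //; exists i; rewrite /bead /part /=; lia.
by case=> X ->; exists X.+1; split => //; rewrite /bead /part /=; lia.
Qed.

Lemma bead_decr l s X : is_partition l -> bead l s X.+1 < bead l s X.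
Proof. by move=> hl; have := partition_nthS X hl; rewrite /bead; lia. Qed.

Lemma bead_ge_charge l s X : (size l <= X)%N -> bead l s X = s - X%:Z - 1.
Proof. by move=> hX; rewrite /bead nth_default //; lia. Qed.

Lemma decr_inj (f : nat -> int) : (forall X, f X.+1 < f X) -> injective f.
Proof.
move=> /Order.NatMonotonyTheory.nhomo_ltn_lt hf a b hab.
by case: (ltngtP a b) => // /hf; rewrite hab ltxx.
Qed.

Lemma decr_eq_of_image (f g : nat -> int) :
  (forall X, f X.+1 < f X) -> (forall X, g X.+1 < g X) ->
  (forall m, (exists X, m = f X) <-> (exists X, m = g X)) -> f =1 g.
Proof.
move=> /Order.NatMonotonyTheory.nhomo_ltn_lt hf
       /Order.NatMonotonyTheory.nhomo_ltn_lt hg hfg; elim/ltn_ind => X IH.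
have [Y hY] : exists Y, f X = g Y by apply/hfg; exists X.
have [Z hZ] : exists Z, g X = f Z by apply/hfg; exists X.
case: (ltngtP Y X) => hYX; last by rewrite hY hYX.
  by have := hf _ _ hYX; rewrite hY -IH // ltxx.
case: (ltngtP Z X) => hZX; last by rewrite hZ hZX.
  by have := hg _ _ hZX; rewrite hZ IH // ltxx.
have := hg _ _ hYX; rewrite -hY hZ => /(lt_trans (hf _ _ hZX)).
by rewrite ltxx.
Qed.

Lemma beta_set_inj l s l' s' : is_partition l -> is_partition l' ->
  (forall m, beta_set l s m <-> beta_set l' s' m) -> l = l' /\ s = s'.
Proof.
move=> hl hl' h.
have E := decr_eq_of_image (fun X => bead_decr s X hl) (fun X => bead_decr s' X hl')
  (fun m => iff_trans (iff_sym (beta_setE l s m)) (iff_trans (h m) (beta_setE l' s' m))).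
have hs : s = s'.
  have := E (size l + size l')%N.
  by rewrite !bead_ge_charge ?leq_addl ?leq_addr //; lia.
subst s'; split => //.
have En X : nth 0%N l X = nth 0%N l' X by have := E X; rewrite /bead; lia.
have hsz : size l = size l'.
  case: (ltngtP (size l) (size l')) => // hlt.
    by have := partition_nth_gt0 hl' hlt; rewrite -En nth_default.
  by have := partition_nth_gt0 hl hlt; rewrite En nth_default.
by apply: (eq_from_nth (x0 := 0%N)) => // i _; exact: En.
Qed.

Lemma beta_set_lo l s m : m < s - (size l)%:Z -> beta_set l s m.
Proof.
move=> hm; apply/beta_setE; exists `|(s - m - 1)%R|%N.
by rewrite bead_ge_charge; lia.
Qed.

Lemma beta_set_hi l s m : s + (sumn l)%:Z <= m -> ~ beta_set l s m.
Proof.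
by move=> hm /beta_setE [X hX]; have := nth_le_sumn l X; rewrite /bead in hX; lia.
Qed.

Lemma beta_set_nil s m : beta_set [::] s m <-> m < s.
Proof.
split; first by case/beta_setE => X ->; rewrite /bead nth_nil; lia.
by move=> hm; apply: beta_set_lo; rewrite /= subr0.
Qed.

Lemma beta_set_cons a l s m : (0 < a)%N ->
  beta_set (a :: l) (s + 1) m <-> (m = a%:Z + s \/ beta_set l s m).
Proof.
move=> ha; rewrite !beta_setE; split.
  case=> [[|X] ->]; rewrite /bead /=; first by left; lia.
  by right; exists X; rewrite /bead; lia.
case=> [->|[X ->]]; first by exists 0%N; rewrite /bead /=; lia.
by exists X.+1; rewrite /bead /=; lia.
Qed.

Lemma beta_set_add_max l s m : is_partition l -> bead l s 0 < m ->
  exists l', is_partition l' /\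
    forall x, beta_set l' (s + 1) x <-> x = m \/ beta_set l s x.
Proof.
rewrite /bead /= => hl hm.
case: (ltP s m) => hsm.
  exists (`|(m - s)%R|%N :: l); split.
    rewrite /is_partition /=; case/andP: hl => h1 ->; rewrite andbT.
    apply/andP; split; last lia.
    by case: l h1 hm => //= b l1 ->; rewrite andbT; lia.
  by move=> x; rewrite beta_set_cons; [have -> : `|(m - s)%R|%:Z + s = m by lia|lia].
have -> : l = [::].
  case: l hl hm => // b l' hl' /= hb.
  by have := @partition_nth_gt0 _ 0%N hl' (ltn0Sn _) => /= ?; exfalso; lia.
exists [::]; split => // x; rewrite !beta_set_nil.
by rewrite /= in hm; split; [case: (ltP x s) => ?; [right|left]; lia | case; lia].
Qed.

Lemma beta_set_exists_within (n : nat) (P : int -> Prop) (L U : int) :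
  U - L <= n%:Z -> (forall m, m < L -> P m) -> (forall m, U <= m -> ~ P m) ->
  exists l s, is_partition l /\ forall m, P m <-> beta_set l s m.
Proof.
elim: n P U => [|n IH] P U hn hL hU.
all: case: (ltP L U) => hLU; last first.
  1,3: exists [::], L; split => // m; rewrite beta_set_nil; split; last exact: hL.
  1,2: by move=> hP; case: (ltP m L) => // h; case: (hU m) => //; lia.
  by lia.
case: (classic (P (U - 1))) => hP; last first.
  apply: (IH P (U - 1)) => //; first lia.
  move=> m hm; case: (ltP (U - 1) m) => h; first by apply: hU; lia.
  by have -> : m = U - 1 by lia.
have [l [s [hl hQ]]] : exists l s, is_partition l /\
    forall m, (P m /\ m <> U - 1) <-> beta_set l s m.
  apply: (IH _ (U - 1)); first lia.
    by move=> m hm; split; [exact: hL | lia].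
  by move=> m hm [hPm hne]; apply: (hU m) => //; lia.
have hb0 : bead l s 0 < U - 1.
  have [hp hne] : P (bead l s 0) /\ bead l s 0 <> U - 1 by apply/hQ/beta_setE; exists 0%N.
  by case: (ltP (bead l s 0) (U - 1)) => // h; case: (hU (bead l s 0)) => //; lia.
have [l' [hl' hl'Q]] := beta_set_add_max hl hb0.
exists l', (s + 1); split => // m; rewrite hl'Q -hQ.
by case: (classic (m = U - 1)) => [->|hm]; [split=> // _; left | tauto].
Qed.

Lemma beta_set_exists (P : int -> Prop) (L U : int) :
  (forall m, m < L -> P m) -> (forall m, U <= m -> ~ P m) ->
  exists l s, is_partition l /\ forall m, P m <-> beta_set l s m.
Proof. by apply: (@beta_set_exists_within `|(U - L)%R|%N); lia. Qed.

Lemma beta_setD l t k c : beta_set l t (c - k) <-> beta_set l (t + k) c.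
Proof. by split; case=> X [hX h]; exists X; split => //; lia. Qed.

Lemma beta_decomp_spec (C : int -> Prop) L U :
  (forall m, m < L -> C m) -> (forall m, U <= m -> ~ C m) ->
  is_partition (beta_decomp C).1 /\
  forall c, C c <-> beta_set (beta_decomp C).1 (beta_decomp C).2 c.
Proof.
move=> hL hU; have [l [s [hl h]]] := beta_set_exists hL hU.
have ex : exists p : config, is_partition p.1 /\ forall c, C c <-> beta_set p.1 p.2 c.
  by exists (l, s).
exact: (epsilon_spec (inhabits ([::], 0)) _ ex).
Qed.

Section Stretch.
Variable e : nat.
Hypothesis e_gt0 : (0 < e)%N.
Variable M : 'I_e -> nat.

Lemma runner_setE (B : int -> Prop) (i : nat) c : (i < e)%N ->
  runner_set e B i c <-> B (c * e%:Z + i%:Z).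
Proof.
move=> hi; split.
  case=> b [hb [hbi ->]].
  have hd := divz_eq b e%:Z.
  suff -> : ((b - i%:Z) %/ e%:Z)%Z * e%:Z + i%:Z = b by [].
  have -> : b - i%:Z = (b %/ e%:Z)%Z * e%:Z by rewrite {1}hd hbi; lia.
  by rewrite mulzK ?e_neq0 // [RHS]hd hbi.
move=> hB; exists (c * e%:Z + i%:Z); split => //; split.
  by rewrite modzMDl modz_small //; apply/andP; split; lia.
by rewrite addrK mulzK // e_neq0.
Qed.

Lemma runner_set_bounds (B : int -> Prop) (K K' : int) (i : nat) : (i < e)%N ->
  (forall m, m < K -> B m) -> (forall m, K' <= m -> ~ B m) ->
  (forall c, c < - `|K|%:Z - 1 -> runner_set e B i c) /\
  (forall c, `|K'|%:Z <= c -> ~ runner_set e B i c).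
Proof.
move=> hi hK hK'; split => c hc.
  apply/runner_setE => //; apply: hK.
  have : (c + 1) * (e%:Z - 1) <= 0 by apply: mulr_le0_ge0; lia.
  lia.
move/runner_setE => /(_ hi); apply: hK'.
have : 0 <= c * (e%:Z - 1) by apply: mulr_ge0; lia.
lia.
Qed.

Lemma eta_spec (x : config) (i : 'I_e) :
  is_partition (eta x i).1 /\
  forall c, runner_set e (beta_set x.1 x.2) i c <-> beta_set (eta x i).1 (eta x i).2 c.
Proof.
have [hlo hhi] := runner_set_bounds (ltn_ord i)
  (@beta_set_lo x.1 x.2) (@beta_set_hi x.1 x.2).
exact: beta_decomp_spec hlo hhi.
Qed.

(* [Mres m] is [M_i] for the residue [i] of [m] modulo [e]. *)
Definition Mres (m : int) : nat := (\sum_(i < e) (((m %% e%:Z)%Z == i%:Z) * M i))%N.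

Lemma Mres_res (m : int) (i : 'I_e) : (m %% e%:Z)%Z = i%:Z -> Mres m = M i.
Proof. exact: sum_res_seln. Qed.

Lemma MresDM (m k : int) : Mres (m + k * e%:Z) = Mres m.
Proof. by apply: eq_bigr => i _; rewrite modzDMl. Qed.

(* Stretching moves a bead from [unslide m] to [m] (see [Str_spec]). *)
Definition slide (m : int) : int := m + (e * Mres m)%N%:Z.
Definition unslide (m : int) : int := m - (e * Mres m)%N%:Z.

Lemma unslideK : cancel unslide slide.
Proof.
move=> m; rewrite /unslide /slide.
have -> : m - (e * Mres m)%N%:Z = m + (- (Mres m)%:Z) * e%:Z by rewrite PoszM mulrC mulNr.
by rewrite MresDM; lia.
Qed.

Lemma slideK : cancel slide unslide.
Proof.
move=> m; rewrite /unslide /slide.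
have -> : m + (e * Mres m)%N%:Z = m + (Mres m)%:Z * e%:Z by rewrite PoszM mulrC.
by rewrite MresDM; lia.
Qed.

Lemma unslide_runner (c : int) (i : 'I_e) :
  unslide (c * e%:Z + i%:Z) = (c - (M i)%:Z) * e%:Z + i%:Z.
Proof.
have hi : ((c * e%:Z + i%:Z) %% e%:Z)%Z = i%:Z.
  by move: (ltn_ord i) => hie; rewrite modzMDl modz_small //; apply/andP; split; lia.
by rewrite /unslide (Mres_res hi) PoszM; lia.
Qed.

Definition sumM : nat := (\sum_(i < e) M i)%N.

Lemma Mres_le (m : int) : (e * Mres m <= e * sumM)%N.
Proof.
have [i hi] := modz_ord e_gt0 m.
by rewrite leq_mul2l (Mres_res hi) /sumM (bigD1 i) //= leq_addr orbT.
Qed.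

Lemma unslide_bounds (m : int) : unslide m <= m /\ m - (e * sumM)%N%:Z <= unslide m.
Proof. by have := Mres_le m; rewrite /unslide; lia. Qed.

Lemma unslide_beta_set_exists (x : config) :
  exists y : config, is_partition y.1 /\
    forall m, beta_set y.1 y.2 m <-> beta_set x.1 x.2 (unslide m).
Proof.
have [l [s [hl h]]] : exists l s, is_partition l /\
    forall m, beta_set x.1 x.2 (unslide m) <-> beta_set l s m.
  apply: (@beta_set_exists _ (x.2 - (size x.1)%:Z) (x.2 + (sumn x.1)%:Z + (e * sumM)%N%:Z)).
    by move=> m hm; apply: beta_set_lo; have := unslide_bounds m; lia.
  by move=> m hm; apply: beta_set_hi; have := unslide_bounds m; lia.
by exists (l, s); split => // m; rewrite h.
Qed.

Lemma eta_unslide (x y : config) :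
  (forall i : 'I_e, eta y i = ((eta x i).1, (eta x i).2 + (M i)%:Z)) <->
  (forall m, beta_set y.1 y.2 m <-> beta_set x.1 x.2 (unslide m)).
Proof.
split => [hyx m | hyx i].
  have [i hi] := modz_ord e_gt0 m.
  have hm : m = (m %/ e%:Z)%Z * e%:Z + i%:Z by rewrite {1}(divz_eq m e%:Z) hi.
  rewrite hm unslide_runner -!runner_setE //.
  have [_ ->] := eta_spec y i; have [_ ->] := eta_spec x i.
  by rewrite hyx /= beta_setD.
have [hp1 hp2] := eta_spec y i; have [hq1 hq2] := eta_spec x i.
have [<- <-] : (eta y i).1 = (eta x i).1 /\ (eta y i).2 = (eta x i).2 + (M i)%:Z.
  apply: beta_set_inj => // c; rewrite -hp2 -beta_setD -hq2.
  by rewrite !runner_setE // hyx unslide_runner.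
by case: (eta y i).
Qed.

Lemma Str_spec (x : config) :
  is_partition (Str M x).1 /\
  forall m, beta_set (Str M x).1 (Str M x).2 m <-> beta_set x.1 x.2 (unslide m).
Proof.
have [y [hy hyx]] := unslide_beta_set_exists x.
have [hS hSx] : is_partition (Str M x).1 /\
    forall i : 'I_e, eta (Str M x) i = ((eta x i).1, (eta x i).2 + (M i)%:Z).
  have ex : exists z : config, is_partition z.1 /\
      forall i : 'I_e, eta z i = ((eta x i).1, (eta x i).2 + (M i)%:Z).
    by exists y; split => //; apply/eta_unslide.
  exact: (epsilon_spec (inhabits ([::], 0)) _ ex).
by split => //; apply/eta_unslide.
Qed.

End Stretch.

Definition wsum (L : int) (n : nat) (h : int -> int) : int :=
  \sum_(0 <= k < n) h (L + k%:Z).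

Lemma wsum_supp (h : int -> int) L n a p :
  (forall m, m < a \/ a + p%:Z <= m -> h m = 0) ->
  L <= a -> a + p%:Z <= L + n%:Z -> wsum L n h = wsum a p h.
Proof.
move=> hh hLa hap; set d := `|(a - L)%R|%N.
have hd : a = L + d%:Z by rewrite /d; lia.
have h0 (b c : nat) : (forall k, (b <= k < c)%N -> h (L + k%:Z) = 0) ->
    \sum_(b <= k < c) h (L + k%:Z) = 0.
  by move=> hbc; rewrite big_nat_cond big1 // => k /andP[hk _]; apply: hbc.
rewrite /wsum (@big_cat_nat _ _ _ d) //=; last by lia.
rewrite (@big_cat_nat _ _ _ (d + p)%N _ n); [|lia|lia].
rewrite (h0 0%N d); last by move=> k hk; apply: hh; left; lia.
rewrite (h0 (d + p)%N n); last by move=> k hk; apply: hh; right; lia.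
rewrite /= add0r addr0 -{1}(add0n d) big_addn.
have -> : (d + p - d = p)%N by lia.
by apply: eq_bigr => k _; congr h; lia.
Qed.

Section Slide.
Variable e : nat.
Hypothesis e_gt0 : (0 < e)%N.
Variable M : 'I_e -> nat.

Local Notation SM := (e * sumM M)%N.

Lemma wsum_shift (u : int -> int) L n (Q : nat) : (Q <= n)%N ->
  (forall m, m < L + Q%:Z \/ L + n%:Z <= m -> u m = 0) ->
  wsum L n (fun m => u (m + Q%:Z)) = wsum L n u.
Proof.
move=> hQ hu.
have -> : wsum L n (fun m => u (m + Q%:Z)) = wsum (L + Q%:Z) n u.
  by apply: eq_bigr => k _; congr u; lia.
have hv m : m < L + Q%:Z \/ L + Q%:Z + (n - Q)%N%:Z <= m -> u m = 0.
  by move=> hm; apply: hu; lia.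
by rewrite !(@wsum_supp u _ n (L + Q%:Z) (n - Q) hv) //; lia.
Qed.

(* Split by residues: on residue class [i] the slide is a plain shift by [e * M i]. *)
Lemma wsum_slide (h : int -> int) L n : (SM <= n)%N ->
  (forall m, m < L + SM%:Z \/ L + n%:Z <= m -> h m = 0) ->
  wsum L n (fun m => h (slide M m)) = wsum L n h.
Proof.
move=> hn hh.
have sel m (g : int -> int) : g m = \sum_(i < e) (((m %% e%:Z)%Z == i%:Z)%:R * g m).
  by have [i hi] := modz_ord e_gt0 m; rewrite (sum_res_sel (fun _ => g m) hi).
transitivity (\sum_(i < e) wsum L n (fun m =>
    ((m %% e%:Z)%Z == i%:Z)%:R * h (m + (e * M i)%N%:Z))).
  rewrite /wsum exchange_big /=; apply: eq_bigr => k _.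
  rewrite (sel (L + k%:Z) (fun m => h (slide M m))); apply: eq_bigr => i _.
  by case: eqP => [hi|_]; rewrite ?mul0r // /slide (Mres_res M hi).
transitivity (\sum_(i < e) wsum L n (fun m => ((m %% e%:Z)%Z == i%:Z)%:R * h m)).
  apply: eq_bigr => i _.
  have hQ : (e * M i <= SM)%N by rewrite leq_mul2l /sumM (bigD1 i) //= leq_addr orbT.
  rewrite -(@wsum_shift (fun m => ((m %% e%:Z)%Z == i%:Z)%:R * h m) L n (e * M i)).
  - apply: eq_bigr => k _ /=.
    by rewrite PoszM [_%:Z * _]mulrC modzDMl.
  - lia.
  - by move=> m hm /=; rewrite hh ?mulr0 //; lia.
by rewrite /wsum exchange_big /=; apply: eq_bigr => k _; rewrite [RHS](sel _ h).
Qed.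

Lemma wsum_unslide (h : int -> int) L n : (SM <= n)%N ->
  (forall m, m < L + SM%:Z \/ L + n%:Z <= m -> h (unslide M m) = 0) ->
  wsum L n (fun m => h (unslide M m)) = wsum L n h.
Proof.
move=> hn hh; rewrite -(wsum_slide hn hh).
by apply: eq_bigr => k _; rewrite slideK.
Qed.

End Slide.

Definition propb (P : Prop) : bool := if excluded_middle_informative P then true else false.

Lemma propbP (P : Prop) : reflect P (propb P).
Proof. by rewrite /propb; case: excluded_middle_informative => h; constructor. Qed.

Definition indic (P : Prop) : int := if propb P then 1 else 0.

Lemma indic_iff (P Q : Prop) : (P <-> Q) -> indic P = indic Q.
Proof. by move=> h; rewrite /indic; case: propbP => hp; case: propbP => hq //; tauto. Qed.

Lemma indicT (P : Prop) : P -> indic P = 1.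
Proof. by move=> h; rewrite /indic; case: propbP. Qed.

Lemma indicF (P : Prop) : ~ P -> indic P = 0.
Proof. by move=> h; rewrite /indic; case: propbP. Qed.

Lemma wsum_beta_set l s (N n : nat) (g : int -> int) : is_partition l ->
  (size l <= N)%N -> (N + sumn l <= n)%N ->
  wsum (s - N%:Z) n (fun m => indic (beta_set l s m) * g m) =
  \sum_(0 <= X < N) g (bead l s X).
Proof.
move=> hl hN hn; rewrite /wsum.
rewrite -(big_map (fun k : nat => s - N%:Z + k%:Z) xpredT
  (fun m => indic (beta_set l s m) * g m)).
transitivity (\sum_(m <- [seq m <- [seq s - N%:Z + k%:Z | k : nat <- index_iota 0 n]
                        | propb (beta_set l s m)]) g m).
  rewrite big_filter [RHS]big_mkcond; apply: eq_big => // m _; rewrite /indic.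
  by case: propbP => _; rewrite ?mul1r ?mul0r.
rewrite -(big_map (bead l s) xpredT g); apply: perm_big; apply: uniq_perm.
- apply: filter_uniq; rewrite map_inj_uniq ?iota_uniq //.
  by move=> a b /= h; apply/eqP; rewrite -eqz_nat; apply/eqP; lia.
- by rewrite map_inj_uniq ?iota_uniq //; apply: decr_inj => X; exact: bead_decr.
move=> m; rewrite mem_filter; apply/andP/mapP.
  case=> /propbP /beta_setE [X ->] /mapP [k]; rewrite mem_index_iota => /andP [_ hk] hX.
  exists X => //; rewrite mem_index_iota /=.
  case: (ltnP X N) => // hXN.
  by move: hX; rewrite bead_ge_charge; [lia | exact: leq_trans hN hXN].
case=> X; rewrite mem_index_iota => /andP [_ hX] ->; split.
  by apply/propbP/beta_setE; exists X.
have := nth_le_sumn l X; rewrite /bead => hle.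
by apply/mapP; exists `|(bead l s X - (s - N%:Z))%R|%N; rewrite ?mem_index_iota /bead; lia.
Qed.

(* [beta_sum l s g] is the finite difference between the (infinite) sums of [g]
   over [B_s(l)] and over [B_s(0)]. *)
Definition beta_sum (l : seq nat) (s : int) (g : int -> int) : int :=
  \sum_(0 <= X < size l) (g (bead l s X) - g (s - X%:Z - 1)).

Lemma beta_sumB l s g1 g2 :
  beta_sum l s g1 - beta_sum l s g2 = beta_sum l s (fun m => g1 m - g2 m).
Proof. by rewrite /beta_sum -sumrB; apply: eq_bigr => X _; lia. Qed.

Lemma beta_sum_const l s c : beta_sum l s (fun _ => c) = 0.
Proof. by rewrite /beta_sum big1 // => X _; rewrite subrr. Qed.

Lemma eq_beta_sum l s g1 g2 : g1 =1 g2 -> beta_sum l s g1 = beta_sum l s g2.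
Proof. by move=> h; apply: eq_bigr => X _; rewrite !h. Qed.

Definition beta_delta (l : seq nat) (s m : int) : int :=
  indic (beta_set l s m) - indic (m < s).

Lemma beta_delta_out l s m : m < s - (size l)%:Z \/ s + (sumn l)%:Z <= m ->
  beta_delta l s m = 0.
Proof.
rewrite /beta_delta; case=> hm.
  by rewrite !indicT ?subrr //; [lia | exact: beta_set_lo].
by rewrite !indicF ?subrr //; [lia | exact: beta_set_hi].
Qed.

Lemma wsum_beta_delta l s L n g : is_partition l ->
  L <= s - (size l)%:Z -> s + (sumn l)%:Z <= L + n%:Z ->
  wsum L n (fun m => beta_delta l s m * g m) = beta_sum l s g.
Proof.
move=> hl hL hn; set N := `|(s - L)%R|%N.
have hN : N%:Z = s - L by rewrite /N; lia.
have -> : L = s - N%:Z by lia.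
transitivity (wsum (s - N%:Z) n (fun m => indic (beta_set l s m) * g m) -
              wsum (s - N%:Z) n (fun m => indic (beta_set [::] s m) * g m)).
  rewrite /wsum -sumrB; apply: eq_bigr => k _.
  by rewrite /beta_delta mulrBl (indic_iff (iff_sym (beta_set_nil s _))).
rewrite !wsum_beta_set //; [|rewrite /=; lia|lia..].
rewrite -sumrB (@big_cat_nat _ _ _ (size l)) //=; last by lia.
rewrite [X in _ + X]big1_seq ?addr0; last first.
  move=> X; rewrite mem_index_iota /= => /andP [hX _].
  by rewrite !bead_ge_charge ?subrr.
by apply: eq_bigr => X _; rewrite [bead [::] _ _]bead_ge_charge.
Qed.

Section ResidueCount.
Variable e : nat.
Hypothesis e_gt0 : (0 < e)%N.

Definition res_count1 (l : seq nat) (s : int) (j : nat) : nat :=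
  (\sum_(x < size l) \sum_(y < nth 0%N l x)
     (((s + y.+1%:Z - x.+1%:Z) %% e%:Z)%Z == j%:Z))%N.

Lemma res_count1E l s j : (j < e)%N ->
  (res_count1 l s j)%:Z = beta_sum l s (floor_res e j).
Proof.
move=> hj; rewrite /res_count1 /beta_sum big_mkord.
rewrite (big_morph Posz (id1 := 0) (op1 := +%R) PoszD (erefl _)).
apply: eq_bigr => x _.
have -> : (\sum_(y < nth 0%N l x) (((s + y.+1%:Z - x.+1%:Z) %% e%:Z)%Z == j%:Z))%N =
   (\sum_(y < nth 0%N l x) ((((s - x.+1%:Z) + y.+1%:Z) %% e%:Z)%Z == j%:Z))%N.
  by apply: eq_bigr => y _; congr (nat_of_bool (_ == _)); congr (_ %% _)%Z; lia.
by rewrite count_res_interval // /bead; congr (floor_res e j _ - floor_res e j _); lia.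
Qed.

Lemma beta_sum_res l s (i : 'I_e) :
  beta_sum l s (fun m => ((m %% e%:Z)%Z == i%:Z)%:R) =
  (res_count1 l s i)%:Z - (res_count1 l s (ordS i))%:Z.
Proof.
rewrite !res_count1E ?ltn_ord // beta_sumB /=.
have [hlt|heq] : (i.+1 < e)%N \/ i.+1 = e by have := ltn_ord i; lia.
  by rewrite modn_small //; apply: eq_beta_sum => m; rewrite floor_res_subS.
rewrite heq modnn.
transitivity (beta_sum l s (fun m => (floor_res e i m - floor_res e 0 m) + 1)).
  apply: eq_beta_sum => m.
  by rewrite -floor_res_subS ?ltn_ord // heq floor_res_e //; ring.
by rewrite /beta_sum; apply: eq_bigr => X _; ring.
Qed.

End ResidueCount.

(* The window [[L, L + n)] contains, with margin [d] on both sides, every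
   integer where [B_s(l)] and [B_s(0)] differ. *)
Definition covers (d : nat) (L : int) (n : nat) (l : seq nat) (s : int) : Prop :=
  L + d%:Z <= s - (size l)%:Z /\ s + (sumn l)%:Z + d%:Z <= L + n%:Z.

Lemma covers_exists d l s l' s' : exists L n, covers d L n l s /\ covers 0 L n l' s'.
Proof.
set A := (`|(s - s')%R| + size l + size l' + d)%N.
exists (s - A%:Z), (2 * A + sumn l + sumn l' + d)%N.
by rewrite /covers /A; lia.
Qed.

Lemma wsum_indic_lt (t L : int) (n : nat) : L <= t -> t <= L + n%:Z ->
  wsum L n (fun m => indic (m < t)) = t - L.
Proof.
move=> h1 h2; set N := `|(t - L)%R|%N.
have hN : N%:Z = t - L by rewrite /N; lia.
have -> : L = t - N%:Z by lia.
transitivity (wsum (t - N%:Z) n (fun m => indic (beta_set [::] t m) * 1)).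
  by apply: eq_bigr => k _; rewrite mulr1 (indic_iff (beta_set_nil t _)).
rewrite wsum_beta_set //=; last by lia.
rewrite big_const_nat subn0.
suff -> : iter N (+%R 1) (0 : int) = N%:Z by lia.
by elim: N {hN} => //= N ->; lia.
Qed.

Section StretchCount.
Variable e : nat.
Hypothesis e_gt0 : (0 < e)%N.
Variable M : 'I_e -> nat.

Local Notation SM := (e * sumM M)%N.

Lemma wsum_res (i : 'I_e) (s : int) (k : nat) :
  wsum s (e * k) (fun m => ((m %% e%:Z)%Z == i%:Z)%:R) = k%:Z.
Proof.
rewrite /wsum big_mkord.
have := count_res_interval e_gt0 (s - 1) (e * k) (ltn_ord i).
rewrite (big_morph Posz (id1 := 0) (op1 := +%R) PoszD (erefl _)) floor_resD //.
have -> : \sum_(y < e * k) (((s - 1 + y.+1%:Z) %% e%:Z)%Z == i%:Z : nat)%:Z =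
          \sum_(y < e * k) (((s + y%:Z) %% e%:Z)%Z == i%:Z)%:R :> int.
  apply: eq_bigr => y _; have -> : s - 1 + y.+1%:Z = s + y%:Z by lia.
  by case: (_ == _).
by move=> ->; rewrite addrC addKr.
Qed.

Lemma Mres_sum (m : int) :
  (Mres M m)%:Z = \sum_(i < e) (M i)%:Z * ((m %% e%:Z)%Z == i%:Z)%:R.
Proof.
have [i hi] := modz_ord e_gt0 m.
by rewrite (Mres_res M hi) -(sum_res_sel (fun i => (M i)%:Z) hi); apply: eq_bigr => i' _; rewrite mulrC.
Qed.

Lemma wsum_unslide_lt (s L : int) (n : nat) :
  L + SM%:Z <= s -> s + SM%:Z <= L + n%:Z ->
  wsum L n (fun m => indic (unslide M m < s) - indic (m < s)) = (sumM M)%:Z.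
Proof.
move=> h1 h2.
have pw m : indic (unslide M m < s) - indic (m < s) =
    \sum_(i < e) ((m %% e%:Z)%Z == i%:Z)%:R * indic (s <= m /\ m < s + (e * M i)%N%:Z).
  have [i hi] := modz_ord e_gt0 m.
  rewrite (sum_res_sel (fun i => indic (s <= m /\ m < s + (e * M i)%N%:Z)) hi).
  rewrite /unslide (Mres_res M hi) /indic.
  by case: propbP => ha; case: propbP => hb; case: propbP => hc //; exfalso; lia.
rewrite /wsum; under eq_bigr do rewrite pw.
rewrite exchange_big /= /sumM (big_morph Posz (id1 := 0) (op1 := +%R) PoszD (erefl _)).
apply: eq_bigr => i _.
have hMi : (e * M i <= SM)%N by rewrite leq_mul2l /sumM (bigD1 i) //= leq_addr orbT.
rewrite -/(wsum L n (fun m => ((m %% e%:Z)%Z == i%:Z)%:R *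
  indic (s <= m /\ m < s + (e * M i)%N%:Z))) (@wsum_supp _ L n s (e * M i)); [|by move=> m hm; rewrite indicF ?mulr0 //; lia|lia|lia].
rewrite -(wsum_res i s (M i)); apply: eq_big_nat => k /andP [_ hk].
by rewrite indicT ?mulr1 //; split; lia.
Qed.

Lemma floor_res_slide (j : nat) (m : int) :
  floor_res e j (slide M m) =
  floor_res e j m + \sum_(i < e) (M i)%:Z * ((m %% e%:Z)%Z == i%:Z)%:R.
Proof. by rewrite /slide floor_resD // Mres_sum. Qed.

Lemma beta_sum_slide l s (j : nat) :
  beta_sum l s (fun m => floor_res e j (slide M m)) = beta_sum l s (floor_res e j) +
  \sum_(i < e) (M i)%:Z * beta_sum l s (fun m => ((m %% e%:Z)%Z == i%:Z)%:R).
Proof.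
rewrite /beta_sum; under eq_bigr do rewrite !floor_res_slide.
under [X in _ = _ + X]eq_bigr do rewrite mulr_sumr.
rewrite [X in _ = _ + X]exchange_big -big_split /=; apply: eq_bigr => X _.
by under [X in _ = _ + X]eq_bigr do rewrite mulrBr; rewrite sumrB; ring.
Qed.

(* The contribution of the change of charge alone: it does not depend on the partition. *)
Definition stretch_defect (j : nat) (s : int) : int :=
  wsum s SM (fun m => (indic (unslide M m < s) - indic (m < s + (sumM M)%:Z)) *
                      floor_res e j m).

Lemma stretch_defect_out (s m : int) : m < s \/ s + SM%:Z <= m ->
  indic (unslide M m < s) - indic (m < s + (sumM M)%:Z) = 0.
Proof.
have [h1 h2] := unslide_bounds e_gt0 M m.
have hS : (sumM M <= SM)%N by rewrite leq_pmull.
by case=> hm; [rewrite !indicT | rewrite !indicF]; rewrite ?subrr //; lia.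
Qed.

Section Window.
Variables (l : seq nat) (s L : int) (n : nat).
Hypothesis l_part : is_partition l.
Let y := Str M (l, s).
Hypothesis cover_ls : covers SM L n l s.
Hypothesis cover_y : covers 0 L n y.1 y.2.

Let y_part : is_partition y.1.
Proof. by have [] := Str_spec e_gt0 M (l, s). Qed.

Lemma beta_delta_Str (m : int) : beta_delta y.1 y.2 m =
  beta_delta l s (unslide M m) + (indic (unslide M m < s) - indic (m < y.2)).
Proof.
have [_ hy] := Str_spec e_gt0 M (l, s).
by rewrite /beta_delta (indic_iff (hy m)); ring.
Qed.

Lemma wsum_beta_delta_unslide (g : int -> int) :
  wsum L n (fun m => beta_delta l s (unslide M m) * g m) =
  beta_sum l s (fun m => g (slide M m)).
Proof.
case: cover_ls => h1 h2.
transitivity (wsum L n (fun m =>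
    (fun m => beta_delta l s m * g (slide M m)) (unslide M m))).
  by apply: eq_bigr => k _; rewrite /= unslideK.
rewrite (@wsum_unslide e e_gt0 M (fun m => beta_delta l s m * g (slide M m))); last first.
- move=> m hm; rewrite beta_delta_out ?mul0r //.
  by have := unslide_bounds e_gt0 M m; lia.
- lia.
by apply: wsum_beta_delta => //; lia.
Qed.

Lemma Str_charge_window : y.2 = s + (sumM M)%:Z.
Proof.
case: cover_ls cover_y => h1 h2 [h3 h4].
have := wsum_beta_delta_unslide (fun _ => 1).
rewrite beta_sum_const.
have -> : wsum L n (fun m => beta_delta l s (unslide M m) * 1) =
    wsum L n (fun m => beta_delta y.1 y.2 m * 1) -
    wsum L n (fun m => indic (unslide M m < s) - indic (m < s)) -
    (wsum L n (fun m => indic (m < s)) - wsum L n (fun m => indic (m < y.2))).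
  rewrite /wsum -!sumrB; apply: eq_bigr => k _; rewrite beta_delta_Str; ring.
rewrite wsum_beta_delta ?beta_sum_const //; [|lia|lia].
by rewrite wsum_unslide_lt ?wsum_indic_lt //; lia.
Qed.

Lemma res_count1_Str_window (j : nat) : (j < e)%N ->
  (res_count1 e y.1 y.2 j)%:Z = (res_count1 e l s j)%:Z +
     \sum_(i < e) (M i)%:Z * beta_sum l s (fun m => ((m %% e%:Z)%Z == i%:Z)%:R) +
     stretch_defect j s.
Proof.
move=> hj; case: cover_ls cover_y => h1 h2 [h3 h4].
rewrite !res_count1E // -beta_sum_slide -wsum_beta_delta_unslide.
rewrite -(@wsum_beta_delta y.1 y.2 L n) //; [|lia|lia].
rewrite /stretch_defect -Str_charge_window -(@wsum_supp (fun m =>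
  (indic (unslide M m < s) - indic (m < y.2)) * floor_res e j m) L n s SM); last first.
- lia.
- lia.
- by move=> m hm; rewrite Str_charge_window stretch_defect_out ?mul0r.
by rewrite /wsum -big_split; apply: eq_bigr => k _; rewrite beta_delta_Str mulrDl.
Qed.

End Window.

Lemma Str_charge l s : is_partition l -> (Str M (l, s)).2 = s + (sumM M)%:Z.
Proof.
move=> hl; have [L [n [h1 h2]]] := covers_exists SM l s (Str M (l, s)).1 (Str M (l, s)).2.
exact: Str_charge_window h1 h2.
Qed.

Lemma res_count1_Str l s (j : 'I_e) : is_partition l ->
  (res_count1 e (Str M (l, s)).1 (Str M (l, s)).2 j)%:Z = (res_count1 e l s j)%:Z +
     \sum_(i < e) (M i)%:Z * ((res_count1 e l s i)%:Z - (res_count1 e l s (ordS i))%:Z) +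
     stretch_defect j s.
Proof.
move=> hl; have [L [n [h1 h2]]] := covers_exists SM l s (Str M (l, s)).1 (Str M (l, s)).2.
rewrite (res_count1_Str_window hl h1 h2 (ltn_ord j)).
by congr (_ + _ + _); apply: eq_bigr => i _; rewrite beta_sum_res.
Qed.

End StretchCount.

Lemma eq0_of_shift_eq0 (I : finType) (w : I -> int) (f : I -> I) (a : I -> int) :
  (forall j, a j + \sum_i w i * (a i - a (f i)) = 0) -> forall j, a j = 0.
Proof.
set c := \sum_i _ => ha.
have hc : c = 0.
  rewrite /c big1 // => i _.
  by have := ha i; have := ha (f i); rewrite -/c => h1 h2; rewrite (_ : _ - _ = 0) ?mulr0 //; lia.
by move=> j; have := ha j; rewrite hc addr0.
Qed.

Section MultiCharged.
Variable e : nat.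
Hypothesis e_gt0 : (0 < e)%N.
Variable r : nat.

Lemma res_countE (X : mconfig r) (j : 'I_e) :
  res_count X j = (\sum_(k < r) res_count1 e (X.1 k) (X.2 k) j)%N.
Proof. by []. Qed.

Lemma msize_res_count (X : mconfig r) : msize X = (\sum_(j < e) res_count X j)%N.
Proof.
rewrite /msize /res_count exchange_big /=; apply: eq_bigr => k _.
rewrite exchange_big /= sumnE (big_nth 0%N) big_mkord; apply: eq_bigr => x _.
rewrite exchange_big /=; under eq_bigr do rewrite sum_res_eq1 //.
by rewrite sum1_card card_ord.
Qed.

Lemma block_eqE (X Y : mconfig r) :
  block_eq e X Y <-> X.2 = Y.2 /\ forall j : 'I_e, res_count X j = res_count Y j.
Proof.
split=> [[? [_ ?]] //|[? hres]]; split=> //; split=> //.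
by rewrite !msize_res_count; apply: eq_bigr => j _.
Qed.

Variable M : 'I_e -> nat.

Lemma mStr_charge (lam : 'I_r -> seq nat) (s : {ffun 'I_r -> int}) :
  (forall k, is_partition (lam k)) ->
  (mStr M (lam, s)).2 = [ffun k => s k + (sumM M)%:Z].
Proof. by move=> hl; apply/ffunP => k; rewrite !ffunE Str_charge. Qed.

Lemma res_count_mStr (lam : 'I_r -> seq nat) (s : {ffun 'I_r -> int}) (j : 'I_e) :
  (forall k, is_partition (lam k)) ->
  (res_count (mStr M (lam, s)) j)%:Z = (res_count (lam, s) j)%:Z +
    \sum_(i < e) (M i)%:Z * ((res_count (lam, s) i)%:Z - (res_count (lam, s) (ordS i))%:Z) +
    \sum_(k < r) stretch_defect M j (s k).
Proof.
move=> hl; rewrite !res_countE.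
rewrite !(big_morph Posz (id1 := 0) (op1 := +%R) PoszD (erefl _)).
under eq_bigr => k _ do rewrite /mStr /= ffunE res_count1_Str //.
rewrite !big_split /=; congr (_ + _ + _).
rewrite exchange_big /=; apply: eq_bigr => i _.
by rewrite !res_countE !(big_morph Posz (id1 := 0) (op1 := +%R) PoszD (erefl _)) -sumrB mulr_sumr.
Qed.

Lemma res_count_mStr_sub (lam mu : 'I_r -> seq nat) (s : {ffun 'I_r -> int}) (j : 'I_e) :
  (forall k, is_partition (lam k)) -> (forall k, is_partition (mu k)) ->
  let a i := (res_count (lam, s) i)%:Z - (res_count (mu, s) i)%:Z in
  (res_count (mStr M (lam, s)) j)%:Z - (res_count (mStr M (mu, s)) j)%:Z =
  a j + \sum_(i < e) (M i)%:Z * (a i - a (ordS i)).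
Proof.
move=> hlam hmu a; rewrite !res_count_mStr //.
set S := \sum_(i < e) (M i)%:Z * (a i - a (ordS i)).
have -> : S = \sum_(i < e) (M i)%:Z *
    ((res_count (lam, s) i)%:Z - (res_count (lam, s) (ordS i))%:Z) -
  \sum_(i < e) (M i)%:Z * ((res_count (mu, s) i)%:Z - (res_count (mu, s) (ordS i))%:Z).
  by rewrite -sumrB; apply: eq_bigr => i _; rewrite /a; ring.
by rewrite /a; ring.
Qed.

End MultiCharged.

Theorem lemma3p7 (e : nat) (he : (2 <= e)%N) (r : nat) (hr : (1 <= r)%N)
  (M : 'I_e -> nat) (lam mu : 'I_r -> seq nat) (s s' : {ffun 'I_r -> int}) :
  (forall k, is_partition (lam k)) -> (forall k, is_partition (mu k)) ->
  (block_eq e (lam, s) (mu, s') <->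
   block_eq e (mStr M (lam, s)) (mStr M (mu, s'))).
Proof.
move=> hlam hmu; have e_gt0 : (0 < e)%N by apply: ltnW.
rewrite !block_eqE // (mStr_charge e_gt0 M s hlam) (mStr_charge e_gt0 M s' hmu) /=.
have -> : [ffun k => s k + (sumM M)%:Z] = [ffun k => s' k + (sumM M)%:Z] <-> s = s'.
  split=> [/ffunP h|-> //]; apply/ffunP => k.
  by move: (h k); rewrite !ffunE; apply: addIr.
split=> -[<- hres]; split=> // j; apply/eqP; rewrite -eqz_nat -subr_eq0; apply/eqP.
  rewrite res_count_mStr_sub // big1 => [|i _]; by rewrite !hres !subrr ?mulr0.
move: j; apply: (@eq0_of_shift_eq0 _ (fun i => (M i)%:Z) (@ordS e)
  (fun i => (res_count (lam, s) i)%:Z - (res_count (mu, s) i)%:Z)) => i.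
by rewrite -res_count_mStr_sub // hres subrr.
Qed.
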